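(* Assume $x\mapsto\mathfrak S(x,z,\xi_i)$ is continuously differentiable for every $z$ and $i$, and define $\Delta_X^{(t)}\equiv\frac1m\sum_{i\in[m]}(\mathrm{id}-\mathbb E^{(0)})X_i\,\mathfrak S(\langle X_i,\mathrm u_X^{(t)}\rangle,\langle X_i,\mu_\ast\rangle,\xi_i)\in\mathbb R^n$. Then for every $t\ge1$, $$\|\mu^{(t)}-\mathrm u_X^{(t)}\|\le\|\eta_{[0:t)}\|_\infty\,\mathfrak M^{(t-1)}_{\mu^{(\cdot)},\mathrm u_X^{(\cdot)}}(X)\max_{s\in[1:t]}\|\Delta_X^{(s-1)}\|.$$
   Context: Let $m,n\ge1$. Let $X\in\mathbb R^{m\times n}$ be a random matrix with rows $X_1,\dots,X_m$; $\mu_\ast\in\mathbb R^n$, $\xi=(\xi_1,\dots,\xi_m)$, $\mathcal F:\mathbb R^2\to\mathbb R$, $Y_i=\mathcal F(\langle X_i,\mu_\ast\rangle,\xi_i)$; $\mathsf L:\mathbb R^2\to\mathbb R$ a loss, $\mathfrak S(x_0,z_0,\xi_0)\equiv\partial_1\mathsf L(x_0,\mathcal F(z_0,\xi_0))$, $\partial_1\mathfrak S$ its derivative in $x_0$. Gradient descent: $\mu^{(t)}=\mu^{(t-1)}-\frac{\eta_{t-1}}{m}X^\top\mathfrak S(X\mu^{(t-1)},X\mu_\ast,\xi)$ (componentwise) with initialization $\mu^{(0)}$ and step sizes $\eta_s>0$. $X$ is independent of $(\mu^{(0)},\mu_\ast,\xi)$ and $\mathbb E^{(0)}$ is expectation conditional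 on $(\mu^{(0)},\mu_\ast,\xi)$ (assume all expectations finite). Theoretical gradient descent: $\mathrm u_X^{(0)}=\mu^{(0)}$, $\mathrm u_X^{(t)}=\mathrm u_X^{(t-1)}-\frac{\eta_{t-1}}{m}\mathbb E^{(0)}X^\top\mathfrak S(X\mathrm u_X^{(t-1)},X\mu_\ast,\xi)$. Let $U\sim\mathrm{Unif}[0,1]$, $\pi_m\sim\mathrm{Unif}\{1,\dots,m\}$ be independent of everything. For $\mathrm u,\mathrm v$: $M_{\mathrm u,\mathrm v}(X)\equiv\mathbb E_{U,\pi_m}\partial_1\mathfrak S(\langle X_{\pi_m},U\mathrm u+(1-U)\mathrm v\rangle,\langle X_{\pi_m},\mu_\ast\rangle,\xi_{\pi_m})X_{\pi_m}X_{\pi_m}^\top$ (expectation over $U,\pi_m$ only), and for sequences $\mathfrak M^{(t)}_{\mathrm u^{(\cdot)},\mathrm v^{(\cdot)}}(X)\equiv1+\max_{\tau\in[0:t]}\sum_{s\in[0:\tau]}\prod_{r\in[s:\tau]}\|I_n-\eta_rM_{\mathrm u^{(r)},\mathrm v^{(r)}}(X)\|_{op}$. $[a:b]=\{a,\dots,b\}$, $\|\eta_{[0:t)}\|_\infty=\max_{0\le s<t}\eta_s$. *)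

From HB Require Import structures.
From mathcomp Require Import all_boot all_order all_algebra.
From mathcomp Require Import all_classical all_reals all_analysis.
Set Implicit Arguments.
Unset Strict Implicit.
Unset Printing Implicit Defensive.
Import Order.TTheory GRing.Theory Num.Theory.
Import numFieldNormedType.Exports.
Local Open Scope classical_set_scope.
Local Open Scope ring_scope.

Section Defs.
Variable R : realType.

Definition vnorm (k : nat) (v : 'cV[R]_k) : R :=
  Num.sqrt (\sum_(i < k) (v i 0) ^+ 2).

Definition opnorm (k : nat) (A : 'M[R]_k) : R :=
  sup [set vnorm (A *m v) | v in [set v : 'cV[R]_k | vnorm v <= 1]].

Definition Sfrak (L : R -> R -> R) (F : R -> R -> R) (x0 z0 xi0 : R) : R :=
  derive1 (fun x => L x (F z0 xi0)) x0.

Definition dSfrak (L : R -> R -> R) (F : R -> R -> R) (x0 z0 xi0 : R) : R :=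
  derive1 (fun x => Sfrak L F x z0 xi0) x0.

Variables (m n : nat) (L F : R -> R -> R) (xi : 'cV[R]_m) (mustar : 'cV[R]_n).

Definition Svec (X : 'M[R]_(m, n)) (mu : 'cV[R]_n) : 'cV[R]_m :=
  \col_i Sfrak L F ((X *m mu) i 0) ((X *m mustar) i 0) (xi i 0).

(* the empirical gradient (1/m) X^T frak S(X mu, X mu_*, xi), without the 1/m *)
Definition grad (X : 'M[R]_(m, n)) (mu : 'cV[R]_n) : 'cV[R]_n :=
  X^T *m Svec X mu.

Fixpoint gd (eta : nat -> R) (mu0 : 'cV[R]_n) (X : 'M[R]_(m, n)) (t : nat)
  : 'cV[R]_n :=
  match t with
  | 0%N => mu0
  | t'.+1 => gd eta mu0 X t' - (eta t' / m%:R) *: grad X (gd eta mu0 X t')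
  end.

Variables (d : measure_display) (Omega : measurableType d)
  (P : probability Omega R).

Definition Evec (k : nat) (f : Omega -> 'cV[R]_k) : 'cV[R]_k :=
  \col_i fine ('E_P[fun w => f w i 0]).

Fixpoint tgd (eta : nat -> R) (mu0 : 'cV[R]_n) (X : Omega -> 'M[R]_(m, n))
  (t : nat) : 'cV[R]_n :=
  match t with
  | 0%N => mu0
  | t'.+1 => tgd eta mu0 X t'
       - (eta t' / m%:R) *: Evec (fun w => grad (X w) (tgd eta mu0 X t'))
  end.

Definition DeltaX (eta : nat -> R) (mu0 : 'cV[R]_n) (X : Omega -> 'M[R]_(m, n))
  (w : Omega) (t : nat) : 'cV[R]_n :=
  m%:R^-1 *: (grad (X w) (tgd eta mu0 X t)
               - Evec (fun w' => grad (X w') (tgd eta mu0 X t))).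

End Defs.

(* M_{u,v}(X) = E_{U,pi_m} d1S(<X_pi, U u + (1-U) v>, <X_pi, mu_*>, xi_pi) X_pi X_pi^T,
   U ~ Unif[0,1], pi_m ~ Unif{1..m} *)
Definition Mmat (R : realType) (m n : nat) (L F : R -> R -> R) (xi : 'cV[R]_m)
  (mustar : 'cV[R]_n) (X : 'M[R]_(m, n)) (u v : 'cV[R]_n) : 'M[R]_n :=
  m%:R^-1 *: \sum_(i < m)
    ((\int[@lebesgue_measure R]_(U in `[0%R, 1%R])
        dSfrak L F ((X *m (U *: u + (1 - U) *: v)) i 0) ((X *m mustar) i 0)
          (xi i 0))
     *: ((row i X)^T *m row i X)).

Definition Mfrak (R : realType) (n : nat) (eta : nat -> R)
  (M : nat -> 'M[R]_n) (t : nat) : R :=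
  1 + \big[Num.max/0]_(tau < t.+1)
        \sum_(0 <= s < tau.+1) \prod_(s <= r < tau.+1)
           opnorm (1%:M - eta r *: M r).

Definition etamax (R : realType) (eta : nat -> R) (t : nat) : R :=
  \big[Num.max/0]_(s < t) eta s.

From HB Require Import structures.
From mathcomp Require Import all_boot all_order all_algebra.
From mathcomp Require Import all_classical all_reals all_analysis.
From mathcomp Require Import ring lra.

Set Implicit Arguments.
Unset Strict Implicit.
Unset Printing Implicit Defensive.
Import Order.TTheory GRing.Theory Num.Theory.
Import numFieldNormedType.Exports.
Local Open Scope classical_set_scope.
Local Open Scope ring_scope.

(* Write e_t = mu^(t) - u_X^(t).  The fundamental theorem of calculus along
   the segment from u_X^(t) to mu^(t) linearises the difference of the two
   empirical gradients: X^T S(X mu) - X^T S(X u) = m M_{mu,u}(X) (mu - u).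
   Subtracting the two descent steps therefore gives the affine recursion
   e_(t+1) = (I - eta_t M_t) e_t - eta_t Delta_X^(t), with e_0 = 0.  Unrolling
   it and bounding each factor I - eta_r M_r by its operator norm produces
   exactly the sums of products of operator norms appearing in Mfrak. *)

Section EuclideanNorm.
Variable R : realType.

Lemma sum_mul_sqr_le (k : nat) (a b : 'I_k -> R) :
  (\sum_i a i * b i) ^+ 2 <= (\sum_i a i ^+ 2) * (\sum_i b i ^+ 2).
Proof.
have sum_prod (f g : 'I_k -> R) :
    \sum_i \sum_j f i * g j = (\sum_i f i) * (\sum_j g j).
  by rewrite mulr_suml; apply: eq_bigr => i _; rewrite mulr_sumr.
have lagrange : \sum_i \sum_j (a i * b j - a j * b i) ^+ 2 =
    \sum_i \sum_j a i ^+ 2 * b j ^+ 2 + \sum_i \sum_j b i ^+ 2 * a j ^+ 2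
    - 2 * \sum_i \sum_j (a i * b i) * (a j * b j).
  rewrite mulr_sumr -!big_split -sumrB; apply: eq_bigr => i _.
  rewrite mulr_sumr -!big_split -sumrB; apply: eq_bigr => j _ /=; ring.
have : 0 <= \sum_i \sum_j (a i * b j - a j * b i) ^+ 2.
  by apply: sumr_ge0 => i _; apply: sumr_ge0 => j _; exact: sqr_ge0.
by rewrite lagrange !sum_prod expr2; nra.
Qed.

Lemma vnorm_ge0 (k : nat) (v : 'cV[R]_k) : 0 <= vnorm v.
Proof. exact: sqrtr_ge0. Qed.

Lemma vnorm_sqr (k : nat) (v : 'cV[R]_k) : vnorm v ^+ 2 = \sum_i v i 0 ^+ 2.
Proof. by rewrite sqr_sqrtr //; apply: sumr_ge0 => i _; exact: sqr_ge0. Qed.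

Lemma vnorm0 (k : nat) : vnorm (0 : 'cV[R]_k) = 0.
Proof. by rewrite /vnorm big1 ?sqrtr0 // => i _; rewrite mxE expr0n. Qed.

Lemma vnormZ (k : nat) (c : R) (v : 'cV[R]_k) : vnorm (c *: v) = `|c| * vnorm v.
Proof.
rewrite /vnorm (eq_bigr (fun i => c ^+ 2 * v i 0 ^+ 2)); last first.
  by move=> i _; rewrite mxE exprMn.
by rewrite -mulr_sumr sqrtrM ?sqr_ge0 // sqrtr_sqr.
Qed.

Lemma vnormD (k : nat) (u v : 'cV[R]_k) : vnorm (u + v) <= vnorm u + vnorm v.
Proof.
have cs := sum_mul_sqr_le (fun i => u i 0) (fun i => v i 0).
rewrite -!vnorm_sqr -exprMn in cs.
set s := \sum_i _ in cs.
have s_le : s <= vnorm u * vnorm v.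
  have := mulr_ge0 (vnorm_ge0 u) (vnorm_ge0 v); nra.
have sqr_le : vnorm (u + v) ^+ 2 <= (vnorm u + vnorm v) ^+ 2.
  rewrite vnorm_sqr (eq_bigr (fun i => u i 0 ^+ 2 + v i 0 ^+ 2 + 2 * (u i 0 * v i 0))).
    by rewrite !big_split /= -mulr_sumr -!vnorm_sqr -/s; nra.
  by move=> i _; rewrite mxE; ring.
have := vnorm_ge0 (u + v); have := vnorm_ge0 u; have := vnorm_ge0 v; nra.
Qed.

Lemma vnormB (k : nat) (u v : 'cV[R]_k) : vnorm (u - v) <= vnorm u + vnorm v.
Proof. by have := vnormD u (- v); rewrite -scaleN1r vnormZ normrN1 mul1r. Qed.

Lemma vnorm_mulmx_le_frobenius (k : nat) (A : 'M[R]_k) (v : 'cV[R]_k) :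
  vnorm (A *m v) <= Num.sqrt (\sum_i \sum_j A i j ^+ 2) * vnorm v.
Proof.
have frob_ge0 : 0 <= \sum_i \sum_j A i j ^+ 2.
  by apply: sumr_ge0 => i _; apply: sumr_ge0 => j _; exact: sqr_ge0.
have : vnorm (A *m v) ^+ 2 <= (Num.sqrt (\sum_i \sum_j A i j ^+ 2) * vnorm v) ^+ 2.
  rewrite exprMn !vnorm_sqr sqr_sqrtr // mulr_suml; apply: ler_sum => i _.
  by rewrite mxE; exact: (sum_mul_sqr_le (fun j => A i j) (fun j => v j 0)).
have := mulr_ge0 (sqrtr_ge0 (\sum_i \sum_j A i j ^+ 2)) (vnorm_ge0 v).
have := vnorm_ge0 (A *m v); nra.
Qed.

Lemma opnorm_has_sup (k : nat) (A : 'M[R]_k) :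
  has_sup [set vnorm (A *m v) | v in [set v : 'cV[R]_k | vnorm v <= 1]].
Proof.
split; first by exists (vnorm (A *m 0)); exists 0; rewrite //= vnorm0.
exists (Num.sqrt (\sum_i \sum_j A i j ^+ 2)) => _ [v /= v_le1 <-].
apply: le_trans (vnorm_mulmx_le_frobenius A v) _.
by rewrite ler_piMr ?sqrtr_ge0.
Qed.

Lemma opnorm_ge0 (k : nat) (A : 'M[R]_k) : 0 <= opnorm A.
Proof.
have := sup_upper_bound (opnorm_has_sup A) (ex_intro2 _ _ 0 _ erefl).
by rewrite mulmx0 vnorm0; apply; rewrite /= vnorm0.
Qed.

Lemma vnorm_mulmx_le_opnorm (k : nat) (A : 'M[R]_k) (v : 'cV[R]_k) :
  vnorm (A *m v) <= opnorm A * vnorm v.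
Proof.
have [v0|v_neq0] := eqVneq (vnorm v) 0.
  by have := vnorm_mulmx_le_frobenius A v; rewrite v0 !mulr0.
have v_gt0 : 0 < vnorm v by rewrite lt_def v_neq0 vnorm_ge0.
have unit : vnorm ((vnorm v)^-1 *: v) <= 1.
  by rewrite vnormZ gtr0_norm ?invr_gt0 // mulVf.
have := sup_upper_bound (opnorm_has_sup A) (ex_intro2 _ _ ((vnorm v)^-1 *: v) unit erefl).
by rewrite -scalemxAr vnormZ gtr0_norm ?invr_gt0 // ler_pdivrMl // mulrC.
Qed.

End EuclideanNorm.

Section AffineRecursion.
Variable R : realType.

Definition suffix_prods (a : nat -> R) (t : nat) : R :=
  \sum_(0 <= s < t.+1) \prod_(s <= r < t.+1) a r.

Lemma suffix_prods_ge0 (a : nat -> R) t :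
  (forall r, 0 <= a r) -> 0 <= suffix_prods a t.
Proof. by move=> a_ge0; apply: sumr_ge0 => s _; apply: prodr_ge0. Qed.

Lemma suffix_prodsS (a : nat -> R) t :
  suffix_prods a t.+1 = a t.+1 * (1 + suffix_prods a t).
Proof.
rewrite /suffix_prods big_nat_recr //= big_nat1 mulrDr mulr1 addrC.
rewrite mulr_sumr; congr (_ + _); apply: eq_big_nat => s /andP[_ s_le].
by rewrite big_nat_recr 1?ltnW //= mulrC.
Qed.

Lemma le_bigmax_ordS (f : nat -> R) t :
  \big[Num.max/0]_(i < t) f i <= \big[Num.max/0]_(i < t.+1) f i.
Proof. exact: (@le_bigmax_ord _ _ 0 t t.+1 xpredT f (leqnSn t)). Qed.

Lemma le_bigmax_ord_last (f : nat -> R) t : f t <= \big[Num.max/0]_(i < t.+1) f i.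
Proof. exact: (le_bigmax 0 (fun i : 'I_t.+1 => f i) ord_max). Qed.

Variables (n : nat) (eta : nat -> R) (M : nat -> 'M[R]_n) (D e : nat -> 'cV[R]_n).
Hypotheses (eta_ge0 : forall r, 0 <= eta r) (e0 : e 0%N = 0)
  (eS : forall r, e r.+1 = (1%:M - eta r *: M r) *m e r - eta r *: D r).

Let a r := opnorm (1%:M - eta r *: M r).
Let Dmax t := \big[Num.max/0]_(s < t) vnorm (D s).

Lemma vnorm_recursion_le_suffix_prods t :
  vnorm (e t.+1) <= etamax eta t.+1 * (1 + suffix_prods a t) * Dmax t.+1.
Proof.
have a_ge0 r : 0 <= a r by exact: opnorm_ge0.
have step r : vnorm (e r.+1) <= a r * vnorm (e r) + eta r * vnorm (D r).
  rewrite eS; apply: le_trans (vnormB _ _) _.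
  by rewrite vnormZ ger0_norm // lerD2r vnorm_mulmx_le_opnorm.
have etamax_ge0 r : 0 <= etamax eta r by exact: bigmax_ge_id.
have Dmax_ge0 r : 0 <= Dmax r by exact: bigmax_ge_id.
have etaD_le r : eta r * vnorm (D r) <= etamax eta r.+1 * Dmax r.+1.
  apply: ler_pM; [exact: eta_ge0|exact: vnorm_ge0|exact: le_bigmax_ord_last|].
  exact: (le_bigmax_ord_last (fun s => vnorm (D s))).
elim: t => [|t IH].
  have := step 0%N; rewrite e0 vnorm0 mulr0 add0r => e1_le.
  have := suffix_prods_ge0 0 a_ge0; have := etaD_le 0%N.
  have := mulr_ge0 (etamax_ge0 1%N) (Dmax_ge0 1%N); nra.
have max_le : etamax eta t.+1 * Dmax t.+1 <= etamax eta t.+2 * Dmax t.+2.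
  apply: ler_pM; [by []|by []|exact: le_bigmax_ordS|].
  exact: (le_bigmax_ordS (fun s => vnorm (D s))).
have aC_ge0 : 0 <= a t.+1 * (1 + suffix_prods a t).
  by rewrite mulr_ge0 ?addr_ge0 ?suffix_prods_ge0.
rewrite suffix_prodsS; apply: le_trans (step t.+1) _.
have := ler_wpM2l (a_ge0 t.+1) IH; have := ler_wpM2l aC_ge0 max_le.
have := etaD_le t.+1; nra.
Qed.

Lemma vnorm_recursion_le_Mfrak t :
  vnorm (e t.+1) <= etamax eta t.+1 * Mfrak eta M t * Dmax t.+1.
Proof.
apply: le_trans (vnorm_recursion_le_suffix_prods t) _.
apply: ler_wpM2r; first exact: bigmax_ge_id.
apply: ler_wpM2l; first exact: bigmax_ge_id.
(* Mfrak eta M t unfolds to 1 + max_(tau <= t) suffix_prods a tau. *)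
by rewrite lerD2l; exact: (le_bigmax_ord_last (suffix_prods a)).
Qed.

End AffineRecursion.

Section Linearisation.
Variable R : realType.

Lemma FTC_segment (g : R -> R) (a b : R) :
  (forall x, derivable g x 1) -> continuous (derive1 g) ->
  g a - g b =
  (\int[@lebesgue_measure R]_(U in `[0%R, 1%R]) derive1 g (U * (a - b) + b)) * (a - b).
Proof.
move=> g_der g'_cont.
pose p (U : R) := U * (a - b) + b.
have p_der (U : R) : is_derive U 1 p (a - b).
  have -> : p = (a - b) \*: id + cst b by apply/funext => V; rewrite /p /= mulrC.
  by rewrite -[X in is_derive _ _ _ X]addr0 -[X in X + 0]mulr1; apply: is_deriveD.
have gp_der (U : R) : is_derive U 1 (g \o p) (derive1 g (p U) * (a - b)).
  by apply: is_derive1_comp; rewrite derive1E; exact: derivableP.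
have p_cont : continuous p.
  by move=> U; apply: differentiable_continuous; rewrite -derivable1_diffP.
have gp_derivable (U : R) : derivable (g \o p) U 1 by have := gp_der U.
have gp_cont : continuous (g \o p).
  by move=> U; apply: differentiable_continuous; rewrite -derivable1_diffP.
have integrand_cont : continuous (fun U => derive1 g (p U) * (a - b)).
  move=> U; apply: (@continuousM _ _ (derive1 g \o p) (cst (a - b))).
    by apply: continuous_comp; [exact: p_cont|exact: g'_cont].
  exact: cst_continuous.
have := @continuous_FTC2 R _ (g \o p) 0 1 ltr01 (continuous_subspaceT integrand_cont).
move=> /(_ (And3 (fun U _ => gp_derivable U)
    (cvg_at_right_filter (gp_cont 0)) (cvg_at_left_filter (gp_cont 1)))).
move=> /(_ (fun U _ => eq_trans (derive1E _ _) (@derive_val _ _ _ _ _ _ _ (gp_der U)))) FTC.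
rewrite mulrC -RintegralZl //; last first.
  apply: continuous_compact_integrable; first exact: segment_compact.
  apply: continuous_subspaceT => U.
  by apply: continuous_comp; [exact: p_cont|exact: g'_cont].
rewrite /Rintegral; under eq_integral => x _ do rewrite mulrC.
by rewrite FTC /= /p mul1r mul0r add0r subrK.
Qed.

End Linearisation.

Section GradientDescent.
Variables (R : realType) (m n : nat) (L F : R -> R -> R).
Variables (xi : 'cV[R]_m) (mustar : 'cV[R]_n).
Hypothesis m_gt0 : (0 < m)%N.
Hypothesis S_derivable :
  forall (i : 'I_m) z x, derivable (fun x0 => Sfrak L F x0 z (xi i 0)) x 1.
Hypothesis dS_continuous :
  forall (i : 'I_m) z, continuous (fun x0 => dSfrak L F x0 z (xi i 0)).

Lemma gradB_Mmat (X : 'M[R]_(m, n)) (u v : 'cV[R]_n) :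
  grad L F xi mustar X u - grad L F xi mustar X v
  = m%:R *: (Mmat L F xi mustar X u v *m (u - v)).
Proof.
have m_neq0 : (m%:R : R) != 0 by rewrite pnatr_eq0 -lt0n.
rewrite /Mmat -scalemxAl scalerA mulfV // scale1r mulmx_suml /grad -mulmxBr.
apply/matrixP => j k; rewrite (ord1 k) !mxE summxE; apply: eq_bigr => i _.
rewrite -scalemxAl -mulmxA !mxE.
set z := \sum_j0 X i j0 * mustar j0 0.
set a := \sum_j0 X i j0 * u j0 0.
set b := \sum_j0 X i j0 * v j0 0.
have segment U : (X *m (U *: u + (1 - U) *: v)) i 0 = U * (a - b) + b.
  rewrite mxE /a /b mulrBr !mulr_sumr -sumrB -big_split /=.
  by apply: eq_bigr => l _; rewrite !mxE; ring.
have -> : \sum_j0 (row i X)^T j j0 * (row i X *m (u - v)) j0 0 = X i j * (a - b).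
  rewrite big_ord1 !mxE /a /b -sumrB; congr (_ * _); apply: eq_bigr => l _.
  by rewrite !mxE mulrBr.
under eq_Rintegral => U _ do rewrite segment.
by rewrite (@FTC_segment _ _ a b (@S_derivable i z) (@dS_continuous i z)); ring.
Qed.

Variables (eta : nat -> R) (mu0 : 'cV[R]_n).
Variables (d : measure_display) (Omega : measurableType d) (P : probability Omega R).
Variables (X : Omega -> 'M[R]_(m, n)) (w : Omega).

Let mu t := gd L F xi mustar eta mu0 (X w) t.
Let u t := tgd L F xi mustar P eta mu0 X t.

Lemma gd_tgd_errorS r :
  mu r.+1 - u r.+1 =
  (1%:M - eta r *: Mmat L F xi mustar (X w) (mu r) (u r)) *m (mu r - u r)
  - eta r *: DeltaX L F xi mustar P eta mu0 X w r.
Proof.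
have m_neq0 : (m%:R : R) != 0 by rewrite pnatr_eq0 -lt0n.
have step_algebra (x y g g' ev : 'cV[R]_n) (A : 'M[R]_n) (c : R) :
    g - g' = m%:R *: (A *m (x - y)) ->
    (x - (c / m%:R) *: g) - (y - (c / m%:R) *: ev)
    = (1%:M - c *: A) *m (x - y) - c *: (m%:R^-1 *: (g' - ev)).
  move=> gB; have -> : g = g' + m%:R *: (A *m (x - y)) by rewrite -gB addrC subrK.
  rewrite mulmxBl mul1mx -scalemxAl; move: (A *m (x - y)) => z.
  by apply/matrixP => i j; rewrite !mxE; field.
exact: step_algebra (gradB_Mmat _ _ _).
Qed.

End GradientDescent.

Theorem mainTheorem10 (R : realType) (m n : nat) (Hm : (0 < m)%N) (Hn : (0 < n)%N)
  (L F : R -> R -> R) (xi : 'cV[R]_m) (mustar mu0 : 'cV[R]_n)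
  (eta : nat -> R) (Heta : forall s, 0 < eta s)
  (d : measure_display) (Omega : measurableType d) (P : probability Omega R)
  (X : Omega -> 'M[R]_(m, n)) :
  (* L is differentiable in its first argument where frak S is used *)
  (forall (i : 'I_m) z x, derivable (fun x0 => L x0 (F z (xi i 0))) x 1) ->
  (* x |-> frak S(x, z, xi_i) is continuously differentiable *)
  (forall (i : 'I_m) z x, derivable (fun x0 => Sfrak L F x0 z (xi i 0)) x 1) ->
  (forall (i : 'I_m) z, continuous (fun x0 => dSfrak L F x0 z (xi i 0))) ->
  (* the expectations defining the theoretical iterates are finite *)
  (forall t (j : 'I_n), P.-integrable setT
      (fun w => ((grad L F xi mustar (X w) (tgd L F xi mustar P eta mu0 X t)) j 0)%:E)) ->
  forall (w : Omega) (t : nat), (1 <= t)%N ->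
  vnorm (gd L F xi mustar eta mu0 (X w) t - tgd L F xi mustar P eta mu0 X t)
  <= etamax eta t
     * Mfrak eta (fun r => Mmat L F xi mustar (X w)
                     (gd L F xi mustar eta mu0 (X w) r)
                     (tgd L F xi mustar P eta mu0 X r)) (t - 1)
     * \big[Num.max/0]_(s < t) vnorm (DeltaX L F xi mustar P eta mu0 X w s).
Proof.
(* The bound holds sample by sample. *)
move=> _ S_derivable dS_continuous _ w [|t] // _; rewrite subSS subn0.
apply: (vnorm_recursion_le_Mfrak
  (e := fun r => gd L F xi mustar eta mu0 (X w) r - tgd L F xi mustar P eta mu0 X r)).
- by move=> s; exact: ltW.
- exact: subrr.
- exact: gd_tgd_errorS.
Qed.
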